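(* Assume $\theta_i<1$ for all $i$ and $\theta_j>0$ for some $j$. Suppose $\mathcal G(C)$ is a star topology with center node $l$ and $0<\theta_l<1$. Then: (i) for every $i\in\mathcal V_p\setminus\{l\}$ with $C_{li}=0$ and every $x(0)\in\Delta_n$, the trajectory of system (A) satisfies that $x_i(s)$ converges exponentially to $\dfrac{n-\sqrt{n^2-4n\theta_i(1-\theta_i)}}{2n\theta_i}$; (ii) if moreover $C_{li}=0$ for all $i\in\mathcal V_p\setminus\{l\}$ and $\sum_{j\in\mathcal V_p\setminus\{l\}}\theta_j\le \dfrac{4n}{5}-1$, then for every $x(0)\in\Delta_n$ the trajectory of system (A) converges exponentially to the unique equilibrium $x^*$ given by $x^*_i=\dfrac{n-\sqrt{n^2-4n\theta_i(1-\theta_i)}}{2n\theta_i}$ for $i\in\mathcal V_p\setminus\{l\}$, $x^*_l=\dfrac{n-\sqrt{n^2-4n\theta_l(1-\theta_l)\xi^*}}{2n\theta_l}$, and $x^*_i=\dfrac1n+\big(\dfrac{\xi^*}{n}-x^*_l\big)C_{li}$ for $i\in\mathcal V_f$, where $\xi^*=n-r-n\sum_{j\in\mathcal V_p\setminus\{l\}}x^*_j$ and $r=|\mathcal V_f|$.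
   Context: Let $n\ge 2$, $\mathbf 1_n$ the all-ones vector, $I_n$ the identity matrix, $\Delta_n=\{x\in\mathbb R^n: x\ge 0,\ \mathbf 1_n^Tx=1\}$. Let $C\in\mathbb R^{n\times n}$ be a nonnegative row-stochastic matrix with zero diagonal, and $\mathcal G(C)$ the digraph on $\{1,\dots,n\}$ with an edge $(i,j)$ iff $C_{ij}>0$. $\mathcal G(C)$ is a star topology with center node $l$ if every edge of $\mathcal G(C)$ is either from $l$ or to $l$ (i.e. $C_{ij}>0$ implies $i=l$ or $j=l$). Let $\theta=(\theta_1,\dots,\theta_n)\in[0,1]^n$, $\Theta=\mathrm{diag}(\theta)$, $W(x)=\mathrm{diag}(x)+(I_n-\mathrm{diag}(x))C$. Let $\mathcal V_f=\{i:\theta_i=0\}$ and $\mathcal V_p=\{i:\theta_i>0\}$. System (A): $x(s+1)=F(x(s))$, $s=0,1,2,\dots$, $x(0)\in\Delta_n$, where $F(x)=(I_n-\Theta)(I_n-W(x)^T\Theta)^{-1}\mathbf 1_n/n$. *)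

(* the real numbers are modelled by an arbitrary
   archimedean real closed field R (has Num.sqrt, matrices, invmx). *)
From HB Require Import structures.
From mathcomp Require Import all_boot all_order all_algebra.
Set Implicit Arguments. Unset Strict Implicit. Unset Printing Implicit Defensive.
Import Order.TTheory GRing.Theory Num.Theory.
Local Open Scope ring_scope.

Section Defs.
Variable R : archiRcfType.
Variable n : nat.

Definition row_stochastic_zero_diag (C : 'M[R]_n) : Prop :=
  (forall i j, 0 <= C i j) /\ (forall i, \sum_j C i j = 1) /\ (forall i, C i i = 0).

Definition star_topology (C : 'M[R]_n) (l : 'I_n) : Prop :=
  forall i j, 0 < C i j -> i = l \/ j = l.

Definition Theta (theta : 'I_n -> R) : 'M[R]_n := diag_mx (\row_i theta i).

Definition Wmx (C : 'M[R]_n) (x : 'cV[R]_n) : 'M[R]_n :=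
  diag_mx x^T + (1%:M - diag_mx x^T) *m C.

Definition Fmap (C : 'M[R]_n) (theta : 'I_n -> R) (x : 'cV[R]_n) : 'cV[R]_n :=
  (1%:M - Theta theta) *m invmx (1%:M - (Wmx C x)^T *m Theta theta)
    *m const_mx (n%:R^-1).

Definition in_simplex (x : 'cV[R]_n) : Prop :=
  (forall i, 0 <= x i 0) /\ \sum_i x i 0 = 1.

Definition traj (C : 'M[R]_n) (theta : 'I_n -> R) (x0 : 'cV[R]_n) (s : nat)
  : 'cV[R]_n := iter s (Fmap C theta) x0.

Definition exp_conv (u : nat -> R) (L : R) : Prop :=
  exists c rho : R, 0 <= c /\ 0 <= rho /\ rho < 1 /\
    forall s, `|u s - L| <= c * rho ^+ s.

Definition exp_conv_vec (u : nat -> 'cV[R]_n) (xs : 'cV[R]_n) : Prop :=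
  exists c rho : R, 0 <= c /\ 0 <= rho /\ rho < 1 /\
    forall s i, `|u s i 0 - xs i 0| <= c * rho ^+ s.

Definition root_val (th a : R) : R :=
  (n%:R - Num.sqrt (n%:R ^+ 2 - 4%:R * n%:R * th * (1 - th) * a))
    / (2%:R * n%:R * th).

End Defs.

From HB Require Import structures.
From mathcomp Require Import all_boot all_order all_algebra ring lra.
Import Order.TTheory GRing.Theory Num.Theory.
Set Implicit Arguments. Unset Strict Implicit. Unset Printing Implicit Defensive.
Local Open Scope ring_scope.

(* For x in the simplex write M(x) = I - W(x)^T Theta and y(x) = M(x)^-1 1/n,
   so that F(x) = (I - Theta) y(x).  Since W(x)^T Theta has column sums
   theta_k < 1, a maximum principle (subunit_fixpoint_ge0) makes M(x)
   invertible with y(x) >= 0, and F maps the simplex into itself.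

   On a star with center l the system for y(x) decouples into scalar
   relations (section Star): a leaf i with C_li = 0 satisfies
   F_i(x) (1 - theta_i x_i) = (1 - theta_i)/n, the center satisfies
   F_l(x) (1 - theta_l x_l) = (1 - theta_l) xi(F x)/n, and a node with
   theta_i = 0 is an affine function of F_l(x) and xi(F x).  The fixed points
   of the scalar relations are the roots root_val of a quadratic.  Around
   them the leaf relation contracts (leaf_contraction), which gives part (i);
   the center relation contracts on x_l <= 4/5 up to the forcing error
   |xi - xi*| (center_contraction), and the leaf budget guarantees
   x_l <= 4/5 after one step.  A perturbed-contraction lemma then gives
   geometric convergence of every coordinate to the equilibrium x*, and the
   same contractions show that x* is the unique fixed point (part (ii)). *)

(* Maximum principle: if y = b + A y with A >= 0 entrywise, b >= 0 and every
   column of A summing to less than 1, then y >= 0.  Summing the equation over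
   the negative coordinates of y would otherwise give a strict contradiction.
   This is what makes I - W(x)^T Theta invertible with a nonnegative inverse. *)
Lemma subunit_fixpoint_ge0 (R : realFieldType) n (a : 'I_n -> 'I_n -> R)
    (y b : 'I_n -> R) :
  (forall i j, 0 <= a i j) -> (forall j, \sum_i a i j < 1) ->
  (forall i, 0 <= b i) -> (forall i, y i = b i + \sum_j a i j * y j) ->
  forall i, 0 <= y i.
Proof.
move=> a_ge0 a_col b_ge0 hy.
case: (boolP [exists i, y i < 0]) => [/existsP [i0 yi0_lt0]|/existsPn y_ge0 i];
  last by rewrite leNgt y_ge0.
exfalso; pose N := [pred i | y i < 0].
have neg_row i : N i -> \sum_(j | N j) a i j * y j <= y i.
  move=> _; rewrite hy.
  have : \sum_(j | N j) a i j * y j <= \sum_j a i j * y j.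
    rewrite [X in _ <= X](bigID N) /= lerDl; apply: sumr_ge0 => j.
    by rewrite /N /= -leNgt => hj; exact: mulr_ge0.
  by move: (b_ge0 i); lra.
have sum_rows := ler_sum (index_enum _) neg_row.
rewrite exchange_big /= in sum_rows.
have : \sum_(j | N j) y j < \sum_(j | N j) \sum_(i | N i) a i j * y j.
  apply: ltr_sum; first by apply/hasP; exists i0; [rewrite mem_index_enum|].
  move=> j hj; rewrite -mulr_suml.
  have : \sum_(i | N i) a i j <= \sum_i a i j.
    by rewrite [X in _ <= X](bigID N) /= lerDl; apply: sumr_ge0 => i _.
  by have := a_col j; move: hj; rewrite /N /= => hj; nra.
lra.
Qed.

Lemma simplex_entry01 (R : archiRcfType) n (x : 'cV[R]_n) :
  in_simplex x -> forall i, 0 <= x i 0 <= 1.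
Proof.
move=> [x_ge0 x_sum] i; rewrite x_ge0 /= -x_sum (bigD1 i) //= lerDl.
by apply: sumr_ge0 => j _.
Qed.

Section Resolvent.
Variables (R : archiRcfType) (n : nat) (C : 'M[R]_n) (theta : 'I_n -> R).
Hypothesis HC : row_stochastic_zero_diag C.
Hypothesis theta01 : forall i, 0 <= theta i /\ theta i <= 1.
Hypothesis theta_lt1 : forall i, theta i < 1.

Definition Mx (x : 'cV[R]_n) : 'M[R]_n := 1%:M - (Wmx C x)^T *m Theta theta.
Definition yvec (x : 'cV[R]_n) : 'cV[R]_n := invmx (Mx x) *m const_mx n%:R^-1.

Lemma Wmx_entry (x : 'cV[R]_n) i j :
  Wmx C x i j = (i == j)%:R * x i 0 + (1 - x i 0) * C i j.
Proof.
rewrite /Wmx mulmxBl mul1mx mul_diag_mx !mxE.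
by case: eqP => [->|_]; rewrite /= ?mulr1n ?mulr0n ?mul1r ?mul0r; ring.
Qed.

Lemma Mx_mul_entry (x u : 'cV[R]_n) i :
  (Mx x *m u) i 0 = u i 0 - \sum_k (Wmx C x k i * theta k) * u k 0.
Proof.
rewrite /Mx mulmxBl mul1mx !mxE; congr (_ - _); apply: eq_bigr => k _.
by rewrite /Theta mul_mx_diag !mxE.
Qed.

Lemma Fmap_entry (x : 'cV[R]_n) i : Fmap C theta x i 0 = (1 - theta i) * yvec x i 0.
Proof. by rewrite /Fmap -mulmxA mulmxBl mul1mx /Theta mul_diag_mx !mxE; ring. Qed.

Lemma Wmx_row_sum (x : 'cV[R]_n) k : \sum_i Wmx C x k i = 1.
Proof.
under eq_bigr => i _ do rewrite Wmx_entry.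
rewrite big_split /= -mulr_sumr (proj1 (proj2 HC)) mulr1.
rewrite (bigD1 k) //= eqxx mul1r big1 ?addr0; first ring.
by move=> i; rewrite eq_sym => /negbTE ->; rewrite mul0r.
Qed.

Lemma Wmx_ge0 (x : 'cV[R]_n) k i : (forall i, 0 <= x i 0 <= 1) -> 0 <= Wmx C x k i.
Proof.
move=> x01; rewrite Wmx_entry; have := x01 k; have := (proj1 HC) k i.
by case: (k == i); rewrite /= ?mulr1n ?mulr0n => h1 /andP[h2 h3]; nra.
Qed.

Lemma Mx_solution_ge0 (x u : 'cV[R]_n) (b : 'I_n -> R) :
  (forall i, 0 <= x i 0 <= 1) -> (forall i, 0 <= b i) ->
  (forall i, (Mx x *m u) i 0 = b i) -> forall i, 0 <= u i 0.
Proof.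
move=> x01 b_ge0 hu.
apply: (@subunit_fixpoint_ge0 _ _ (fun i k => Wmx C x k i * theta k) (fun i => u i 0) b).
- by move=> i j; apply: mulr_ge0; [exact: Wmx_ge0 | exact: (proj1 (theta01 j))].
- by move=> j; rewrite -mulr_suml Wmx_row_sum mul1r; exact: theta_lt1.
- exact: b_ge0.
- by move=> i; rewrite -hu Mx_mul_entry; ring.
Qed.

(* M(x) is invertible: a kernel vector v and -v would both be nonnegative. *)
Lemma Mx_unit (x : 'cV[R]_n) : (forall i, 0 <= x i 0 <= 1) -> Mx x \in unitmx.
Proof.
move=> x01; rewrite -unitmx_tr unitmxE unitfE; apply/negP => /det0P [v v_neq0 hv].
have Mv0 : Mx x *m v^T = 0 by rewrite -[Mx x]trmxK -trmx_mul hv trmx0.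
have v_ge0 : forall i, 0 <= v^T i 0.
  by apply: (@Mx_solution_ge0 x _ (fun _ => 0) x01) => // i; rewrite Mv0 mxE.
have v_le0 : forall i, 0 <= (- v^T) i 0.
  by apply: (@Mx_solution_ge0 x _ (fun _ => 0) x01) => // i; rewrite mulmxN Mv0 oppr0 mxE.
move/negP: v_neq0; apply; apply/eqP/rowP => j; rewrite mxE.
by have := v_ge0 j; have := v_le0 j; rewrite !mxE; lra.
Qed.

Lemma yvec_fixpoint (x : 'cV[R]_n) i : (forall i, 0 <= x i 0 <= 1) ->
  yvec x i 0 = n%:R^-1 + \sum_k (Wmx C x k i * theta k) * yvec x k 0.
Proof.
move=> x01; have hK : Mx x *m yvec x = const_mx n%:R^-1 by rewrite /yvec mulKVmx ?Mx_unit.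
move/(congr1 (fun M : 'cV[R]_n => M i 0)): hK.
by rewrite Mx_mul_entry [const_mx _ _ _]mxE => <-; ring.
Qed.

Lemma yvec_ge0 (x : 'cV[R]_n) i : (forall i, 0 <= x i 0 <= 1) -> 0 <= yvec x i 0.
Proof.
move=> x01; apply: (@Mx_solution_ge0 x _ (fun _ => n%:R^-1) x01).
  by move=> _; rewrite invr_ge0 ler0n.
by move=> j; rewrite /yvec mulKVmx ?Mx_unit // mxE.
Qed.

Lemma Fmap_simplex (x : 'cV[R]_n) : (0 < n)%N -> in_simplex x -> in_simplex (Fmap C theta x).
Proof.
move=> n_gt0 x_simplex; have x01 := simplex_entry01 x_simplex; split.
  move=> i; rewrite Fmap_entry; apply: mulr_ge0; last exact: yvec_ge0.
  by rewrite subr_ge0; case: (theta01 i).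
under eq_bigr => i _ do rewrite Fmap_entry mulrBl mul1r.
rewrite sumrB.
suff -> : \sum_i yvec x i 0 = 1 + \sum_i theta i * yvec x i 0 by ring.
under eq_bigr => i _ do rewrite (@yvec_fixpoint x i x01).
rewrite big_split /= sumr_const card_ord -[_ *+ n]mulr_natr mulVf ?pnatr_eq0 -?lt0n //.
rewrite exchange_big /=; congr (_ + _); apply: eq_bigr => k _.
by rewrite -mulr_suml -mulr_suml Wmx_row_sum mul1r mulrC.
Qed.

Lemma traj_succ (x0 : 'cV[R]_n) s :
  traj C theta x0 s.+1 = Fmap C theta (traj C theta x0 s).
Proof. by rewrite /traj iterS. Qed.

Lemma traj_simplex (x0 : 'cV[R]_n) s : (0 < n)%N -> in_simplex x0 ->
  in_simplex (traj C theta x0 s).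
Proof.
move=> n_gt0 x0_simplex; elim: s => [|s IH] //.
by rewrite traj_succ; exact: Fmap_simplex.
Qed.

End Resolvent.

Section Star.
Variables (R : archiRcfType) (n : nat) (C : 'M[R]_n) (theta : 'I_n -> R) (l : 'I_n).
Hypothesis n_gt0 : (0 < n)%N.
Hypothesis HC : row_stochastic_zero_diag C.
Hypothesis theta01 : forall i, 0 <= theta i /\ theta i <= 1.
Hypothesis theta_lt1 : forall i, theta i < 1.
Hypothesis Hstar : star_topology C l.
Hypothesis center_pos : 0 < theta l.

Local Notation is_leaf j := ((0 < theta j) && (j != l)).
Local Notation yvec := (yvec C theta).

Definition xi_of (x : 'cV[R]_n) : R :=
  n%:R - #|[pred j | theta j == 0]|%:R - n%:R * \sum_(j | is_leaf j) x j 0.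

Lemma n_unit : n%:R != 0 :> R.
Proof. by rewrite pnatr_eq0 -lt0n. Qed.

Lemma star_row k j : k != l -> C k j = (j == l)%:R.
Proof.
move=> kl; have C_ge0 := proj1 HC.
have off_l j' : j' != l -> C k j' = 0.
  move=> jl; apply/eqP; rewrite eq_le (C_ge0 k j') andbT leNgt; apply/negP.
  by move/Hstar => [/eqP|/eqP]; rewrite ?(negbTE kl) ?(negbTE jl).
case: eqP => [->|/eqP jl]; last by rewrite off_l.
by have := (proj1 (proj2 HC)) k; rewrite (bigD1 l) //= big1 ?addr0.
Qed.

Lemma yvec_expand (x : 'cV[R]_n) i : (forall i, 0 <= x i 0 <= 1) ->
  yvec x i 0 = n%:R^-1 + x i 0 * theta i * yvec x i 0 +
    \sum_k (1 - x k 0) * C k i * theta k * yvec x k 0.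
Proof.
move=> x01; rewrite {1}yvec_fixpoint //.
under eq_bigr => k _ do rewrite Wmx_entry !mulrDl.
rewrite big_split /= addrA; congr (_ + _ + _); last by apply: eq_bigr => k _; ring.
rewrite (bigD1 i) //= eqxx mul1r big1 ?addr0 // => k /negbTE ->.
by rewrite /= mulr0n !mul0r.
Qed.

Lemma yvec_noncenter (x : 'cV[R]_n) i : (forall i, 0 <= x i 0 <= 1) -> i != l ->
  yvec x i 0 = n%:R^-1 + x i 0 * theta i * yvec x i 0 +
    (1 - x l 0) * C l i * theta l * yvec x l 0.
Proof.
move=> x01 il; rewrite {1}yvec_expand //; congr (_ + _).
rewrite (bigD1 l) //= big1 ?addr0 // => k kl.
by rewrite star_row // (negbTE il) /= mulr0n; ring.
Qed.

Lemma yvec_center (x : 'cV[R]_n) : (forall i, 0 <= x i 0 <= 1) ->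
  yvec x l 0 = n%:R^-1 + x l 0 * theta l * yvec x l 0 +
    \sum_(k | k != l) (1 - x k 0) * theta k * yvec x k 0.
Proof.
move=> x01; rewrite {1}yvec_expand //; congr (_ + _).
rewrite (bigD1 l) //= (proj2 (proj2 HC)) /= mulr0 !mul0r add0r.
by apply: eq_bigr => k kl; rewrite star_row // eqxx /= mulr1n; ring.
Qed.

Lemma Fmap_leaf (x : 'cV[R]_n) i : in_simplex x -> i != l -> C l i = 0 ->
  Fmap C theta x i 0 * (1 - theta i * x i 0) = (1 - theta i) / n%:R.
Proof.
move=> x_simplex il Cli; have := yvec_noncenter (simplex_entry01 x_simplex) il.
rewrite Cli Fmap_entry => hy.
have hn : n%:R^-1 * n%:R = 1 :> R by rewrite mulVf // n_unit.
by move: hn hy; set y := yvec x i 0; set m := n%:R^-1 => hn hy; nra.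
Qed.

(* Since l is the only non-leaf with theta > 0, n - r = 1 + #leaves. *)
Lemma xi_leaves (x : 'cV[R]_n) :
  xi_of x = 1 + #|[pred j | is_leaf j]|%:R - n%:R * \sum_(j | is_leaf j) x j 0.
Proof.
rewrite /xi_of; congr (_ - _).
have hl : l \in [predC [pred j | theta j == 0]] by rewrite !inE /= lt0r_neq0.
have leaves : #|[pred j | is_leaf j]| = #|[predD1 [predC [pred j | theta j == 0%R]] & l]|.
  apply: eq_card => j; rewrite !inE /= andbC; congr (_ && _).
  by rewrite lt0r (proj1 (theta01 j)) andbT.
have count : (n = 1 + #|[pred j | is_leaf j]| + #|[pred j | theta j == 0%R]|)%N.
  have := cardD1 l [predC [pred j | theta j == 0%R]]; rewrite hl /= => card_nonzero.
  by rewrite -[LHS]card_ord -(cardC [pred j | theta j == 0%R]) card_nonzero leaves addnC.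
rewrite (_ : n%:R = (1 + #|[pred j | is_leaf j]| + #|[pred j | theta j == 0%R]|)%:R);
  by [rewrite !natrD; ring | rewrite -count].
Qed.

Hypothesis leaves_isolated : forall i, 0 < theta i -> i != l -> C l i = 0.

(* Summing the leaf equations expresses the center's input through xi(F x). *)
Lemma yvec_center_xi (x : 'cV[R]_n) : in_simplex x ->
  yvec x l 0 * (1 - theta l * x l 0) = xi_of (Fmap C theta x) / n%:R.
Proof.
move=> x_simplex; have x01 := simplex_entry01 x_simplex.
have leaf_sum : \sum_(k | k != l) (1 - x k 0) * theta k * yvec x k 0 =
   #|[pred j | is_leaf j]|%:R * n%:R^-1 - \sum_(j | is_leaf j) Fmap C theta x j 0.
  rewrite (bigID (fun k => theta k == 0)) /= big1 ?add0r; last first.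
    by move=> k /andP[_ /eqP ->]; rewrite mulr0 mul0r.
  transitivity (\sum_(j | is_leaf j) (n%:R^-1 - Fmap C theta x j 0));
    last by rewrite sumrB sumr_const mulr_natl.
  apply: eq_big => k.
    by rewrite andbC lt0r (proj1 (theta01 k)) andbT.
  move=> /andP[kl tk]; have tk_pos : 0 < theta k by rewrite lt0r tk (proj1 (theta01 k)).
  have := yvec_noncenter x01 kl; rewrite (leaves_isolated tk_pos kl) Fmap_entry.
  by set y := yvec x k 0 => hy; nra.
have hn : n%:R * n%:R^-1 = 1 :> R by rewrite mulfV // n_unit.
have := yvec_center x01; rewrite leaf_sum xi_leaves.
set y := yvec x l 0; set m := n%:R^-1; set S := \sum_(j | _) _; set c := #|_|%:R.
have -> : (1 + c - n%:R * S) / n%:R = m + c * m - S.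
  by rewrite mulrBl mulrDl mul1r (mulrC n%:R) -mulrA hn mulr1.
by rewrite mulrBr mulr1; lra.
Qed.

Lemma Fmap_center (x : 'cV[R]_n) : in_simplex x ->
  Fmap C theta x l 0 * (1 - theta l * x l 0) = (1 - theta l) * xi_of (Fmap C theta x) / n%:R.
Proof. by move=> x_simplex; rewrite -mulrA -(yvec_center_xi x_simplex) Fmap_entry; ring. Qed.

Lemma Fmap_follower (x : 'cV[R]_n) i : in_simplex x -> theta i = 0 ->
  Fmap C theta x i 0 =
    n%:R^-1 + C l i * (xi_of (Fmap C theta x) / n%:R - Fmap C theta x l 0).
Proof.
move=> x_simplex ti.
have il : i != l by apply/eqP => il; move: center_pos; rewrite -il ti ltxx.
have := yvec_noncenter (simplex_entry01 x_simplex) il.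
have := yvec_center_xi x_simplex; rewrite !Fmap_entry ti.
by set yl := yvec x l 0; set X := xi_of _ => <- ->; ring.
Qed.

End Star.

(* r = root_val n t a is the smaller root of n r (1 - t r) = (1 - t) a, i.e.
   the fixed point of the leaf (a = 1) and center (a = xi) equations. *)
Section RootVal.
Variables (R : archiRcfType) (n : nat) (t a : R).
Hypothesis n_gt0 : (0 < n)%N.
Hypothesis t_pos : 0 < t.
Hypothesis t_lt1 : t < 1.
Hypothesis a_ge0 : 0 <= a.
Hypothesis a_le_n : a <= n%:R.

Local Notation N := (n%:R : R).
Local Notation disc := (N ^+ 2 - 4%:R * N * t * (1 - t) * a).
Local Notation r := (root_val n t a).

Let N_pos : 0 < N. Proof. by rewrite ltr0n. Qed.

(* The discriminant is nonnegative (4 t (1 - t) <= 1 and a <= n) and at most n^2. *)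
Lemma disc_ge0 : 0 <= disc.
Proof.
have t_quad : 4%:R * t * (1 - t) <= 1 by have := sqr_ge0 (2%:R * t - 1); rewrite expr2; nra.
have : 4%:R * N * t * (1 - t) * a <= N * N.
  have -> : 4%:R * N * t * (1 - t) * a = N * (4%:R * t * (1 - t) * a) by ring.
  have := ler_wpM2r a_ge0 t_quad; rewrite mul1r => quad_le_a.
  by apply: ler_wpM2l; [exact: ltW | exact: le_trans quad_le_a a_le_n].
by rewrite expr2; lra.
Qed.

Lemma sqrt_disc_le : Num.sqrt disc <= N.
Proof.
have prod_ge0 : 0 <= 4%:R * N * t * (1 - t) * a.
  by rewrite !mulr_ge0 ?ler0n ?(ltW N_pos) ?(ltW t_pos) // subr_ge0 ltW.
rewrite -(ler_pXn2r (n := 2)) ?nnegrE ?sqrtr_ge0 ?ler0n // sqr_sqrtr ?disc_ge0 //.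
lra.
Qed.

Lemma root_val_scaled : r * (2%:R * N * t) = N - Num.sqrt disc.
Proof. by rewrite /root_val divfK // lt0r_neq0 // !mulr_gt0 ?ltr0n. Qed.

Lemma root_val_quadratic : N * r * (1 - t * r) = (1 - t) * a.
Proof.
have s_sq := sqr_sqrtr disc_ge0; have hr := root_val_scaled.
have nz : 4%:R * N * t != 0 by rewrite lt0r_neq0 // !mulr_gt0 ?ltr0n.
apply: (mulfI nz); apply/eqP; rewrite -subr_eq0 -mulrBr; apply/eqP.
have -> : 4%:R * N * t * (N * r * (1 - t * r) - (1 - t) * a) =
  N * (2 * (r * (2%:R * N * t))) - (r * (2%:R * N * t)) ^+ 2 - 4%:R * N * t * (1 - t) * a.
  by ring.
by rewrite hr; move: s_sq; rewrite !expr2 => s_sq; nra.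
Qed.

Lemma root_val_ge0 : 0 <= r.
Proof.
have : 0 <= r * (2%:R * N * t) by rewrite root_val_scaled subr_ge0 sqrt_disc_le.
by rewrite pmulr_lge0 // !mulr_gt0 ?ltr0n.
Qed.

(* n r <= a is equivalent to n - 2 t a <= sqrt disc. *)
Lemma root_val_le : r * N <= a.
Proof.
have s_sq := sqr_sqrtr disc_ge0; have s_ge0 := sqrtr_ge0 disc.
have low : N - 2%:R * t * a <= Num.sqrt disc.
  case: (lerP (N - 2%:R * t * a) 0) => h; first exact: le_trans h s_ge0.
  rewrite -(ler_pXn2r (n := 2)) ?nnegrE ?(ltW h) // s_sq !expr2.
  have : 0 <= t * t * a * (N - a) by rewrite !mulr_ge0 ?(ltW t_pos) // subr_ge0.
  by nra.
have : (r * N - a) * (2%:R * t) <= 0.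
  by have := root_val_scaled; lra.
by rewrite pmulr_lle0 ?subr_le0 // mulr_gt0 ?ltr0n.
Qed.

(* If a <= c n for some c < 1, then t r < 1 - t c; this margin is what makes
   the center equation contract on the region x_l <= c. *)
Lemma root_val_margin c : 0 < c -> c < 1 -> a <= c * N -> t * r < 1 - t * c.
Proof.
move=> c_pos c_lt1 a_le.
have s_sq := sqr_sqrtr disc_ge0; have s_ge0 := sqrtr_ge0 disc.
have key : 2%:R * N * t * c - N < Num.sqrt disc.
  case: (ltrP (2%:R * N * t * c - N) 0) => h; first exact: lt_le_trans h s_ge0.
  rewrite -(ltr_pXn2r (n := 2)) ?nnegrE // s_sq !expr2.
  have : 4%:R * N * t * (1 - t) * a <= 4%:R * N * t * (1 - t) * (c * N).
    by rewrite ler_wpM2l // !mulr_ge0 ?ler0n ?(ltW N_pos) ?(ltW t_pos) // subr_ge0 ltW.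
  have : 0 < N * N * t * t * c * (1 - c) by rewrite !mulr_gt0 // subr_gt0.
  by nra.
have : t * r * (2%:R * N) < (1 - t * c) * (2%:R * N).
  have -> : t * r * (2%:R * N) = r * (2%:R * N * t) by ring.
  by rewrite root_val_scaled; nra.
by rewrite ltr_pM2r // mulr_gt0 ?ltr0n.
Qed.

End RootVal.

Lemma leaf_contraction (R : realFieldType) (N t T x x' r : R) :
  1 <= N -> 0 < t -> t <= T -> T < 1 -> 0 <= x <= 1 ->
  x' * (1 - t * x) = (1 - t) / N -> N * r * (1 - t * r) = 1 - t ->
  0 <= r -> r * N <= 1 ->
  `|x' - r| <= T / (N - T) * `|x - r|.
Proof.
move=> N_ge1 t_pos tT T_lt1 /andP[x_ge0 x_le1] hx hr r_ge0 rN.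
have N_pos : 0 < N by lra.
have hx' : x' * (1 - t * x) * N = 1 - t by rewrite hx divfK // lt0r_neq0.
have err_eq : (x' - r) * ((1 - t * x) * (N * (1 - t * r))) = (1 - t) * t * (x - r).
  transitivity ((x' * (1 - t * x) * N) * (1 - t * r) - (N * r * (1 - t * r)) * (1 - t * x)).
    by ring.
  by rewrite hx' hr; ring.
have den_ge : (1 - t) * (N - t) <= (1 - t * x) * (N * (1 - t * r)).
  have num_ge : 1 - t <= 1 - t * x by nra.
  have den2_ge : N - t <= N * (1 - t * r) by nra.
  apply: le_trans (ler_wpM2l _ den2_ge) _; first lra.
  by apply: ler_wpM2r; lra.
have den_ge0 : 0 <= (1 - t * x) * (N * (1 - t * r)) by nra.
have err_norm : `|x' - r| * ((1 - t * x) * (N * (1 - t * r))) = (1 - t) * t * `|x - r|.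
  by rewrite -(ger0_norm den_ge0) -normrM err_eq normrM ger0_norm //; nra.
set e' := `|x' - r| in err_norm *; set e := `|x - r| in err_norm *.
have e'_ge0 : 0 <= e' by rewrite normr_ge0.
have e_ge0 : 0 <= e by rewrite normr_ge0.
have : e' * (N - t) <= t * e.
  have : e' * ((1 - t) * (N - t)) <= (1 - t) * t * e.
    by rewrite -err_norm; apply: ler_wpM2l.
  move=> scaled; have : (1 - t) * (e' * (N - t) - t * e) <= 0 by lra.
  by rewrite pmulr_rle0 ?subr_gt0 //; lra.
by rewrite mulrAC ler_pdivlMr; [nra | lra].
Qed.

Lemma center_error_bound (R : realFieldType) (N t c x x' r X Xs : R) :
  1 <= N -> 0 < t -> t < 1 -> 0 <= x <= c -> c < 1 -> r <= c ->
  x' * (1 - t * x) = (1 - t) * X / N -> N * r * (1 - t * r) = (1 - t) * Xs ->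
  0 <= r ->
  `|x' - r| * ((1 - t * x) * N) <= (1 - t) * `|X - Xs| + N * r * t * `|x - r|.
Proof.
move=> N_ge1 t_pos t_lt1 /andP[x_ge0 xc] c_lt1 rc hx hr r_ge0.
have N_pos : 0 < N by lra.
have hx' : x' * (1 - t * x) * N = (1 - t) * X by rewrite hx divfK // lt0r_neq0.
have fix_pos : 0 < 1 - t * r by nra.
have err_eq : (x' - r) * ((1 - t * x) * N) = (1 - t) * (X - Xs) + N * r * t * (x - r).
  apply: (mulIf (lt0r_neq0 fix_pos)).
  transitivity ((x' * (1 - t * x) * N) * (1 - t * r) - (N * r * (1 - t * r)) * (1 - t * x)).
    by ring.
  have -> : ((1 - t) * (X - Xs) + N * r * t * (x - r)) * (1 - t * r) =
    (1 - t) * (X - Xs) * (1 - t * r) + (N * r * (1 - t * r)) * t * (x - r) by ring.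
  by rewrite hx' hr; ring.
have coef1 : 0 <= 1 - t by lra.
have coef2 : 0 <= N * r * t by rewrite !mulr_ge0 //; lra.
have gain_pos : 0 < 1 - t * x by nra.
rewrite -(ger0_norm (x := (1 - t * x) * N)); last by rewrite mulr_ge0 //; lra.
rewrite -normrM err_eq; apply: le_trans (ler_normD _ _) _.
by rewrite [`|(1 - t) * _|]normrM [`|N * r * t * _|]normrM (ger0_norm coef1) (ger0_norm coef2).
Qed.

Lemma center_contraction (R : realFieldType) (N t c x x' r X Xs : R) :
  1 <= N -> 0 < t -> t < 1 -> c < 1 -> 0 <= x <= c ->
  x' * (1 - t * x) = (1 - t) * X / N -> N * r * (1 - t * r) = (1 - t) * Xs ->
  0 <= r -> r * N <= Xs -> Xs <= c * N -> t * r < 1 - t * c ->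
  `|x' - r| <= `|X - Xs| / N + t * r / (1 - t * c) * `|x - r|.
Proof.
move=> N_ge1 t_pos t_lt1 c_lt1 /andP[x_ge0 xc] hx hr r_ge0 rN XsN margin.
have N_pos : 0 < N by lra.
have rc : r <= c by rewrite -(ler_pM2r N_pos); lra.
have := center_error_bound N_ge1 t_pos t_lt1 (introT andP (conj x_ge0 xc)) c_lt1 rc hx hr r_ge0.
set e' := `|x' - r|; set e := `|x - r|; set d := `|X - Xs| => err.
have e_ge0 : 0 <= e by rewrite normr_ge0.
have d_ge0 : 0 <= d by rewrite normr_ge0.
have gap_pos : 0 < 1 - t * c by nra.
set rho := t * r / (1 - t * c).
have rho_eq : rho * (1 - t * c) = t * r by rewrite /rho divfK // lt0r_neq0.
have rho_ge0 : 0 <= rho by rewrite /rho divr_ge0 //; nra.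
have gain_ge : 1 - t * c <= 1 - t * x by nra.
have scale_pos : 0 < (1 - t * x) * N by rewrite mulr_gt0 //; lra.
rewrite -(ler_pM2r scale_pos).
have -> : (d / N + rho * e) * ((1 - t * x) * N) =
    (1 - t * x) * d + rho * (1 - t * x) * (N * e).
  have dN : d / N * N = d by rewrite divfK // lt0r_neq0.
  by rewrite -[in RHS]dN; ring.
have rho_ge : t * r <= rho * (1 - t * x) by rewrite -rho_eq ler_wpM2l.
have : N * r * t * e <= rho * (1 - t * x) * (N * e).
  have -> : N * r * t * e = t * r * (N * e) by ring.
  by apply: ler_wpM2r => //; rewrite mulr_ge0 //; lra.
have : (1 - t) * d <= (1 - t * x) * d by apply: ler_wpM2r => //; nra.
lra.
Qed.

Section GeometricBounds.
Variable R : realFieldType.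

Lemma contraction_geometric (e : nat -> R) (rho : R) : 0 <= rho ->
  (forall s, e s.+1 <= rho * e s) -> forall s, e s <= e 0%N * rho ^+ s.
Proof.
move=> rho_ge0 step; elim=> [|s IH]; first by rewrite expr0 mulr1.
by rewrite exprS mulrCA; apply: le_trans (step s) _; rewrite ler_wpM2l.
Qed.

Lemma self_contraction_eq (a b rho : R) : rho < 1 -> `|a - b| <= rho * `|a - b| -> a = b.
Proof.
move=> rho_lt1 contr; apply/eqP; rewrite -subr_eq0 -normr_eq0 eq_le normr_ge0 andbT.
by have := normr_ge0 (a - b); nra.
Qed.

Lemma perturbed_contraction (e : nat -> R) (rho sigma K : R) :
  0 <= rho -> rho < 1 -> 0 <= sigma -> sigma < 1 -> 0 <= K ->
  (forall s, e s.+1 <= rho * e s + K * sigma ^+ s) ->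
  exists c tau,
    [/\ 0 <= c, sigma <= tau, 0 < tau, tau < 1 & forall s, e s <= c * tau ^+ s].
Proof.
move=> rho_ge0 rho_lt1 sigma_ge0 sigma_lt1 K_ge0 step.
pose tau := (1 + Num.max rho sigma) / 2%:R.
have [rho_le sigma_le] : rho <= Num.max rho sigma /\ sigma <= Num.max rho sigma.
  by rewrite !le_max !lexx orbT.
have max_lt1 : Num.max rho sigma < 1 by rewrite gt_max rho_lt1.
have tau_gt : Num.max rho sigma < tau by rewrite /tau ltr_pdivlMr ?ltr0n //; lra.
have tau_lt1 : tau < 1 by rewrite /tau ltr_pdivrMr ?ltr0n //; lra.
pose c := Num.max (e 0%N) (K / (tau - rho)).
have gap : 0 < tau - rho by lra.
have c_ge : K <= c * (tau - rho) by rewrite -ler_pdivrMr // le_max lexx orbT.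
have c_ge0 : 0 <= c by rewrite le_max divr_ge0 ?orbT // ltW.
exists c, tau; split => //; try lra.
elim=> [|s IH]; first by rewrite expr0 mulr1 le_max lexx.
have tau_pow_ge0 : 0 <= tau ^+ s by rewrite exprn_ge0 //; lra.
have pow_le : sigma ^+ s <= tau ^+ s by rewrite lerXn2r ?nnegrE //; lra.
apply: le_trans (step s) _; rewrite exprS.
have : rho * e s <= rho * (c * tau ^+ s) by rewrite ler_wpM2l.
have : K * sigma ^+ s <= K * tau ^+ s by rewrite ler_wpM2l.
have : K * tau ^+ s <= c * (tau - rho) * tau ^+ s by rewrite ler_wpM2r.
by nra.
Qed.

Lemma geometric_from_one (u : nat -> R) (c tau : R) : 0 < tau -> 0 <= c ->
  (forall s, u s.+1 <= c * tau ^+ s) ->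
  exists c', 0 <= c' /\ forall s, u s <= c' * tau ^+ s.
Proof.
move=> tau_pos c_ge0 bound; exists (Num.max (u 0%N) (c / tau)).
have c'_ge : c / tau <= Num.max (u 0%N) (c / tau) by rewrite le_max lexx orbT.
split; first by apply: le_trans c'_ge; rewrite divr_ge0 // ltW.
case=> [|s]; first by rewrite expr0 mulr1 le_max lexx.
have c_le : c <= Num.max (u 0%N) (c / tau) * tau by rewrite -ler_pdivrMr.
apply: le_trans (bound s) _; rewrite exprS mulrA.
by rewrite ler_wpM2r // exprn_ge0 // ltW.
Qed.

End GeometricBounds.

Lemma dist01 (R : realDomainType) (a b : R) : 0 <= a <= 1 -> 0 <= b <= 1 -> `|a - b| <= 1.
Proof. by move=> /andP[a0 a1] /andP[b0 b1]; rewrite ler_norml; apply/andP; split; lra. Qed.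

Section Dynamics.
Variables (R : archiRcfType) (n : nat) (C : 'M[R]_n) (theta : 'I_n -> R) (l : 'I_n).
Hypothesis n_ge2 : (2 <= n)%N.
Hypothesis HC : row_stochastic_zero_diag C.
Hypothesis theta01 : forall i, 0 <= theta i /\ theta i <= 1.
Hypothesis theta_lt1 : forall i, theta i < 1.
Hypothesis Hstar : star_topology C l.
Hypothesis center_pos : 0 < theta l.

Local Notation is_leaf j := ((0 < theta j) && (j != l)).
Local Notation N := (n%:R : R).
Local Notation traj := (traj C theta).
Local Notation F := (Fmap C theta).

Let n_gt0 : (0 < n)%N. Proof. exact: leq_trans n_ge2. Qed.
Let N_ge2 : 2%:R <= N. Proof. by rewrite ler_nat. Qed.
Let N_ge1 : 1 <= N. Proof. by apply: le_trans N_ge2; rewrite ler1n. Qed.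

Definition theta_max : R := \big[Num.max/0]_i theta i.
Definition leaf_rate : R := theta_max / (N - theta_max).

Lemma theta_max_spec : [/\ 0 <= theta_max, theta_max < 1 & forall i, theta i <= theta_max].
Proof.
split; first exact: bigmax_ge_id.
  by apply: bigmax_lt => //; exact: ltr01.
by move=> i; exact: le_bigmax.
Qed.

Lemma leaf_rate_spec : 0 <= leaf_rate /\ leaf_rate < 1.
Proof.
have [tm_ge0 tm_lt1 _] := theta_max_spec; have := N_ge2.
rewrite /leaf_rate; split; first by rewrite divr_ge0 //; lra.
by rewrite ltr_pdivrMr; lra.
Qed.

Lemma leaf_root_spec j : 0 < theta j ->
  [/\ N * root_val n (theta j) 1 * (1 - theta j * root_val n (theta j) 1) = 1 - theta j,
      0 <= root_val n (theta j) 1 & root_val n (theta j) 1 * N <= 1].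
Proof.
move: n_gt0 N_ge1 (theta_lt1 j) => n0 N1 tj_lt1 tj_pos.
split; [rewrite -[RHS]mulr1; apply: root_val_quadratic | apply: root_val_ge0
       | apply: root_val_le]; by rewrite ?ler01.
Qed.

Lemma leaf_step x j : in_simplex x -> 0 < theta j -> j != l -> C l j = 0 ->
  `|F x j 0 - root_val n (theta j) 1| <= leaf_rate * `|x j 0 - root_val n (theta j) 1|.
Proof.
move=> x_simplex tj_pos jl Clj; have [hr r_ge0 rN] := leaf_root_spec tj_pos.
have [_ tm_lt1 tj_le] := theta_max_spec.
exact: leaf_contraction N_ge1 tj_pos (tj_le j) tm_lt1 (simplex_entry01 x_simplex j)
  (Fmap_leaf n_gt0 HC theta01 theta_lt1 Hstar x_simplex jl Clj) hr r_ge0 rN.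
Qed.

Lemma leaf_traj_bound x0 j : in_simplex x0 -> 0 < theta j -> j != l -> C l j = 0 ->
  forall s, `|traj x0 s j 0 - root_val n (theta j) 1| <= leaf_rate ^+ s.
Proof.
move=> x0_simplex tj_pos jl Clj s; have [_ r_ge0 rN] := leaf_root_spec tj_pos.
have decay := contraction_geometric
  (e := fun s => `|traj x0 s j 0 - root_val n (theta j) 1|) (proj1 leaf_rate_spec).
apply: le_trans (decay _ s) _.
  by move=> k /=; apply: leaf_step => //; exact: traj_simplex.
rewrite ler_piMl ?exprn_ge0 ?(proj1 leaf_rate_spec) //.
apply: dist01; first exact: simplex_entry01.
by rewrite r_ge0 /=; have := N_ge1; nra.
Qed.

Lemma leaf_exp_conv i : 0 < theta i -> i != l -> C l i = 0 ->
  forall x0, in_simplex x0 ->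
    exp_conv (fun s => traj x0 s i 0) (root_val n (theta i) 1).
Proof.
move=> ti_pos il Cli x0 x0_simplex; have [rate_ge0 rate_lt1] := leaf_rate_spec.
exists 1, leaf_rate; split; first exact: ler01.
do 2 split => //.
by move=> s; rewrite mul1r; exact: leaf_traj_bound.
Qed.

Section Balanced.
Hypothesis leaves_isolated : forall i, 0 < theta i -> i != l -> C l i = 0.
Hypothesis leaf_budget :
  \sum_(j | is_leaf j) theta j <= 4%:R * N / 5%:R - 1.

Local Notation xi := (xi_of theta l).
Local Notation rs j := (root_val n (theta j) 1).

(* The budget caps xi, hence the center's opinion after one step, by 4/5. *)
Definition cap : R := 4%:R / 5%:R.

Lemma cap_spec : 0 < cap /\ cap < 1.
Proof. by rewrite /cap divr_gt0 ?ltr0n // ltr_pdivrMr ?ltr0n // mul1r ltr_nat. Qed.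

Lemma xi_le_cap (z : 'cV[R]_n) :
  (forall j, is_leaf j -> 1 - theta j <= N * z j 0) -> xi z <= cap * N.
Proof.
move=> z_ge; rewrite xi_leaves // mulr_sumr.
have : \sum_(j | is_leaf j) (1 - theta j) <= \sum_(j | is_leaf j) N * z j 0.
  exact: ler_sum.
rewrite sumrB sumr_const -mulr_natl mulr1.
have -> : cap * N = 4%:R * N / 5%:R by rewrite /cap; ring.
by have := leaf_budget; lra.
Qed.

Lemma Fmap_leaf_lb x j : in_simplex x -> is_leaf j -> 1 - theta j <= N * F x j 0.
Proof.
move=> x_simplex /andP[tj_pos jl].
have step := Fmap_leaf n_gt0 HC theta01 theta_lt1 Hstar x_simplex jl (leaves_isolated tj_pos jl).
have Fx_ge0 := (proj1 (Fmap_simplex HC theta01 theta_lt1 n_gt0 x_simplex)) j.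
have /andP[x_ge0 _] := simplex_entry01 x_simplex j.
have unscale : N * ((1 - theta j) / N) = 1 - theta j by rewrite mulrC divfK // n_unit.
rewrite -{1}unscale -step; apply: ler_wpM2l; first exact: ler0n.
have : 0 <= theta j * x j 0 by apply: mulr_ge0; [case: (theta01 j) | ].
by nra.
Qed.

Lemma leaf_root_lb j : 0 < theta j -> 1 - theta j <= N * rs j.
Proof.
move=> tj_pos; have [hr r_ge0 _] := leaf_root_spec tj_pos.
have : 0 <= N * rs j by rewrite mulr_ge0 ?ler0n.
have : 0 <= theta j * rs j by apply: mulr_ge0 => //; exact: ltW.
by nra.
Qed.

Definition Xs : R := xi (\col_j rs j).
Definition rl : R := root_val n (theta l) Xs.
Definition center_rate : R := theta l * rl / (1 - theta l * cap).

Definition xs : 'cV[R]_n := \col_i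
  (if theta i == 0 then N^-1 + (Xs / N - rl) * C l i else if i == l then rl else rs i).

Lemma xi_ext (x y : 'cV[R]_n) : (forall j, is_leaf j -> x j 0 = y j 0) -> xi x = xi y.
Proof. by move=> eq_leaves; rewrite /xi_of; congr (_ - _ * _); apply: eq_bigr. Qed.

(* 1 <= Xs since n rs_j <= 1, and Xs <= 4n/5 by the leaf budget. *)
Lemma Xs_spec : 1 <= Xs /\ Xs <= cap * N.
Proof.
split; last by apply: xi_le_cap => j /andP[tj_pos _]; rewrite mxE; exact: leaf_root_lb.
rewrite /Xs xi_leaves // mulr_sumr.
have : \sum_(j | is_leaf j) N * (\col_j rs j) j 0 <= \sum_(j | is_leaf j) 1.
  apply: ler_sum => j /andP[tj_pos _]; have [_ _ rN] := leaf_root_spec tj_pos.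
  by rewrite mxE mulrC.
by rewrite sumr_const -mulr_natl mulr1; lra.
Qed.

(* Since 1 <= Xs <= 4n/5, the center root enjoys the margin needed by
   center_contraction, so the center contracts with rate center_rate < 1. *)
Lemma center_root_spec :
  [/\ N * rl * (1 - theta l * rl) = (1 - theta l) * Xs, 0 <= rl, rl * N <= Xs
    & theta l * rl < 1 - theta l * cap].
Proof.
have [Xs_ge1 Xs_le] := Xs_spec; have [cap_pos cap_lt1] := cap_spec.
move: n_gt0 (theta_lt1 l) => n0 tl_lt1.
have Xs_ge0 : 0 <= Xs by lra.
have Xs_leN : Xs <= N by nra.
split; [exact: root_val_quadratic | exact: root_val_ge0 | exact: root_val_le
       | exact: root_val_margin].
Qed.

Lemma center_rate_spec : 0 <= center_rate /\ center_rate < 1.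
Proof.
have [_ rl_ge0 _ margin] := center_root_spec; have [cap_pos cap_lt1] := cap_spec.
have gap_pos : 0 < 1 - theta l * cap by have := theta_lt1 l; nra.
rewrite /center_rate ltr_pdivrMr // mul1r; split => //.
by rewrite divr_ge0 ?(ltW gap_pos) // mulr_ge0 // ltW.
Qed.

Lemma node_cases i : [\/ is_leaf i, i = l | theta i = 0].
Proof.
case: (eqVneq i l) => [->|il]; first by constructor 2.
case: (theta01 i) => ti_ge0 _; rewrite le_eqVlt in ti_ge0.
by case/orP: ti_ge0 => [/eqP <-|ti_pos]; [constructor 3 | constructor 1; apply/andP].
Qed.

Lemma xs_leaf j : is_leaf j -> xs j 0 = rs j.
Proof. by move=> /andP[tj_pos jl]; rewrite mxE gt_eqF // (negbTE jl). Qed.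

Lemma xs_center : xs l 0 = rl.
Proof. by rewrite mxE gt_eqF // eqxx. Qed.

Lemma xs_follower i : theta i = 0 -> xs i 0 = N^-1 + (Xs / N - rl) * C l i.
Proof. by move=> ti; rewrite mxE ti eqxx. Qed.

Lemma center_row_followers : \sum_(i | theta i == 0) C l i = 1.
Proof.
have others : \sum_(i | theta i != 0) C l i = 0.
  rewrite (bigD1 l) /= ?(gt_eqF center_pos) // (proj2 (proj2 HC)) add0r.
  apply: big1 => j /andP[tj jl].
  by apply: leaves_isolated => //; rewrite lt0r tj (proj1 (theta01 j)).
have := (proj1 (proj2 HC)) l.
by rewrite (bigID (fun i => theta i == 0)) /= others addr0.
Qed.

Lemma xs_simplex : in_simplex xs.
Proof.
have [_ rl_ge0 rlN _] := center_root_spec.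
have gap_ge0 : 0 <= Xs / N - rl by rewrite subr_ge0 ler_pdivlMr ?ltr0n.
split.
  move=> i; case: (node_cases i) => [leaf_i|->|/xs_follower ->].
  - by rewrite xs_leaf //; case/andP: leaf_i => /leaf_root_spec[].
  - by rewrite xs_center.
  - by rewrite addr_ge0 ?invr_ge0 ?ler0n // mulr_ge0 // (proj1 HC).
rewrite (bigID (fun i => theta i == 0)) /= [X in _ + X](bigD1 l) /= ?(gt_eqF center_pos) //.
rewrite xs_center (eq_bigr _ (fun i => xs_follower (i := i) \o eqP)) big_split /=.
rewrite -mulr_sumr center_row_followers mulr1 sumr_const.
have -> : \sum_(i | (theta i != 0) && (i != l)) xs i 0 = \sum_(j | is_leaf j) rs j.
  apply: eq_big => [j|j /andP[tj jl]]; first by rewrite lt0r (proj1 (theta01 j)) andbT.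
  by rewrite xs_leaf // lt0r tj (proj1 (theta01 j)).
have -> : Xs / N = 1 - #|[pred i | theta i == 0]|%:R / N - \sum_(j | is_leaf j) rs j.
  rewrite /Xs /xi_of; under eq_bigr => j _ do rewrite mxE.
  by field; rewrite n_unit.
by rewrite -[_ *+ _]mulr_natr mulrC; ring.
Qed.

Lemma xi_at_leaf_roots (z : 'cV[R]_n) : (forall j, is_leaf j -> z j 0 = rs j) -> xi z = Xs.
Proof. by move=> z_leaves; apply: xi_ext => j leaf_j; rewrite z_leaves // mxE. Qed.

Lemma xi_xs : xi xs = Xs.
Proof. exact: xi_at_leaf_roots xs_leaf. Qed.

Lemma xi_error (x : 'cV[R]_n) : `|xi x - Xs| <= N * \sum_(j | is_leaf j) `|x j 0 - rs j|.
Proof.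
have -> : xi x - Xs = - (N * \sum_(j | is_leaf j) (x j 0 - rs j)).
  have col_eq : \sum_(j | is_leaf j) (\col_j rs j) j 0 = \sum_(j | is_leaf j) rs j.
    by apply: eq_bigr => j _; rewrite mxE.
  by rewrite /Xs /xi_of col_eq sumrB; ring.
rewrite normrN normrM ger0_norm ?ler0n // ler_wpM2l ?ler0n //; exact: ler_norm_sum.
Qed.

Lemma balanced_leaf_step x j : in_simplex x -> is_leaf j ->
  `|F x j 0 - rs j| <= leaf_rate * `|x j 0 - rs j|.
Proof.
move=> x_simplex /andP[tj_pos jl].
exact: leaf_step x_simplex tj_pos jl (leaves_isolated tj_pos jl).
Qed.

Lemma Fmap_center_le_cap x : in_simplex x -> F x l 0 <= cap.
Proof.
move=> x_simplex.
have step := Fmap_center n_gt0 HC theta01 theta_lt1 Hstar center_pos leaves_isolated x_simplex.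
have xi_cap : xi (F x) / N <= cap.
  rewrite ler_pdivrMr ?ltr0n //; apply: xi_le_cap => j; exact: Fmap_leaf_lb.
have Fx_ge0 := (proj1 (Fmap_simplex HC theta01 theta_lt1 n_gt0 x_simplex)) l.
have /andP[x_ge0 x_le1] := simplex_entry01 x_simplex l.
have tl_lt1 := theta_lt1 l.
move: step xi_cap; rewrite -mulrA; set y := F x l 0; set X := xi _ / N => step xi_cap.
have : y * (1 - theta l) <= y * (1 - theta l * x l 0).
  by apply: ler_wpM2l => //; have := center_pos; nra.
rewrite step => scaled; have : (1 - theta l) * (y - X) <= 0 by lra.
by rewrite pmulr_rle0 ?subr_gt0 //; lra.
Qed.

Lemma center_step x : in_simplex x -> x l 0 <= cap ->
  `|F x l 0 - rl| <= `|xi (F x) - Xs| / N + center_rate * `|x l 0 - rl|.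
Proof.
move=> x_simplex x_cap; have [hr rl_ge0 rlN margin] := center_root_spec.
have /andP[x_ge0 _] := simplex_entry01 x_simplex l.
exact: (center_contraction N_ge1 center_pos (theta_lt1 l) (proj2 cap_spec)
  (introT andP (conj x_ge0 x_cap))
  (Fmap_center n_gt0 HC theta01 theta_lt1 Hstar center_pos leaves_isolated x_simplex)
  hr rl_ge0 rlN (proj2 Xs_spec) margin).
Qed.

Lemma follower_step x i : in_simplex x -> theta i = 0 ->
  F x i 0 - xs i 0 = C l i * ((xi (F x) - Xs) / N - (F x l 0 - rl)).
Proof.
move=> x_simplex ti.
rewrite (Fmap_follower n_gt0 HC theta01 theta_lt1 Hstar center_pos leaves_isolated x_simplex ti).
by rewrite xs_follower //; ring.
Qed.

Lemma Fmap_eq_xs x : in_simplex x ->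
  (forall j, is_leaf j -> F x j 0 = rs j) -> F x l 0 = rl -> F x = xs.
Proof.
move=> x_simplex leaves_eq center_eq; apply/matrixP => i k; rewrite (ord1 k).
case: (node_cases i) => [leaf_i|->|ti]; first by rewrite leaves_eq ?xs_leaf.
  by rewrite center_eq xs_center.
apply/eqP; rewrite -subr_eq0 follower_step // xi_at_leaf_roots // center_eq !subrr.
by rewrite mul0r subr0 mulr0.
Qed.

Lemma xs_fixed : F xs = xs.
Proof.
have leaves_fixed j : is_leaf j -> F xs j 0 = rs j.
  move=> leaf_j; apply/eqP; rewrite -subr_eq0 -normr_le0.
  by have := balanced_leaf_step xs_simplex leaf_j; rewrite xs_leaf // subrr normr0 mulr0.
have xs_cap : xs l 0 <= cap.
  have [_ _ rlN _] := center_root_spec; have [_ Xs_le] := Xs_spec.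
  have N_pos : 0 < N by rewrite ltr0n.
  by rewrite xs_center -(ler_pM2r N_pos); lra.
have center_fixed : F xs l 0 = rl.
  apply/eqP; rewrite -subr_eq0 -normr_le0; have := center_step xs_simplex xs_cap.
  by rewrite (xi_at_leaf_roots leaves_fixed) xs_center !subrr normr0 mulr0 mul0r addr0.
exact: Fmap_eq_xs xs_simplex leaves_fixed center_fixed.
Qed.

(* Uniqueness: the leaf and center contractions pin down any fixed point. *)
Lemma xs_unique y : in_simplex y -> F y = y -> y = xs.
Proof.
move=> y_simplex y_fixed.
have leaves_fixed j : is_leaf j -> F y j 0 = rs j.
  move=> leaf_j; have := balanced_leaf_step y_simplex leaf_j.
  by rewrite y_fixed; apply: self_contraction_eq (proj2 leaf_rate_spec).
have y_cap : y l 0 <= cap by rewrite -y_fixed; exact: Fmap_center_le_cap.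
have center_fixed : F y l 0 = rl.
  have := center_step y_simplex y_cap.
  rewrite (xi_at_leaf_roots leaves_fixed) subrr normr0 mul0r add0r y_fixed.
  exact: self_contraction_eq (proj2 center_rate_spec).
by rewrite -y_fixed; exact: Fmap_eq_xs.
Qed.

Section Convergence.
Variable x0 : 'cV[R]_n.
Hypothesis x0_simplex : in_simplex x0.

Local Notation x s := (traj x0 s).

Let x_simplex s : in_simplex (x s). Proof. exact: traj_simplex. Qed.

Lemma traj_leaf_bound j s : is_leaf j -> `|x s j 0 - rs j| <= leaf_rate ^+ s.
Proof. by move=> /andP[tj_pos jl]; exact: leaf_traj_bound (leaves_isolated tj_pos jl) s. Qed.

Lemma traj_xi_bound s : `|xi (x s) - Xs| <= N * N * leaf_rate ^+ s.
Proof.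
have leaves_sum : \sum_(j | is_leaf j) `|x s j 0 - rs j| <= N * leaf_rate ^+ s.
  apply: le_trans (ler_sum _ (fun j leaf_j => traj_leaf_bound s leaf_j)) _.
  rewrite sumr_const -[X in X <= _]mulr_natl; apply: ler_wpM2r.
    by rewrite exprn_ge0 // (proj1 leaf_rate_spec).
  by rewrite ler_nat -[X in (_ <= X)%N](card_ord n) max_card.
apply: le_trans (xi_error _) _; rewrite -mulrA; apply: ler_wpM2l => //; exact: ler0n.
Qed.

(* After one step the center's opinion stays below the cap, where it contracts. *)
Lemma traj_center_bound : exists c tau,
  [/\ 0 <= c, leaf_rate <= tau, tau < 1 & forall s, `|x s l 0 - rl| <= c * tau ^+ s].
Proof.
have [rate_ge0 rate_lt1] := leaf_rate_spec; have [crate_ge0 crate_lt1] := center_rate_spec.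
pose e s := `|x s.+1 l 0 - rl|.
have step s : e s.+1 <= center_rate * e s + N * leaf_rate ^+ s.
  have x_cap : x s.+1 l 0 <= cap by rewrite traj_succ; exact: Fmap_center_le_cap.
  rewrite /e [x s.+2]traj_succ.
  apply: le_trans (center_step (x_simplex s.+1) x_cap) _; rewrite -traj_succ addrC lerD2l.
  rewrite ler_pdivrMr ?ltr0n //; apply: le_trans (traj_xi_bound _) _.
  have pow_le : leaf_rate ^+ s.+2 <= leaf_rate ^+ s.
    by rewrite !exprS mulrA ler_piMl ?exprn_ge0 // mulr_ile1 // ltW.
  have -> : N * leaf_rate ^+ s * N = N * N * leaf_rate ^+ s by ring.
  by apply: ler_wpM2l pow_le; rewrite mulr_ge0 ?ler0n.
have [c [tau [c_ge0 rate_le tau_pos tau_lt1 decay]]] :=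
  perturbed_contraction crate_ge0 crate_lt1 rate_ge0 rate_lt1 (ler0n _ n) step.
have [c' [c'_ge0 bound]] :=
  geometric_from_one (u := fun s => `|x s l 0 - rl|) tau_pos c_ge0 decay.
by exists c', tau; split.
Qed.

Lemma traj_follower_bound i s : theta i = 0 ->
  `|x s.+1 i 0 - xs i 0| <= `|xi (x s.+1) - Xs| / N + `|x s.+1 l 0 - rl|.
Proof.
move=> ti; rewrite traj_succ follower_step // -traj_succ normrM.
have Cli_ge0 := (proj1 HC) l i.
have Cli_le1 : C l i <= 1.
  rewrite -((proj1 (proj2 HC)) l) (bigD1 i) //= lerDl.
  by apply: sumr_ge0 => j _; exact: (proj1 HC).
rewrite (ger0_norm Cli_ge0); apply: le_trans (ler_piMl (normr_ge0 _) Cli_le1) _.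
apply: le_trans (ler_normB _ _) _; rewrite normrM normfV (ger0_norm (ler0n _ n)).
by rewrite lerD2r.
Qed.

Lemma traj_exp_conv : exp_conv_vec (traj x0) xs.
Proof.
have [c [tau [c_ge0 rate_le tau_lt1 center_bound]]] := traj_center_bound.
have tau_ge0 : 0 <= tau by have := proj1 leaf_rate_spec; lra.
have pow_le s : leaf_rate ^+ s <= tau ^+ s by rewrite lerXn2r ?nnegrE ?(proj1 leaf_rate_spec).
have pow_ge0 s : 0 <= tau ^+ s by rewrite exprn_ge0.
have N1 := N_ge1.
exists (1 + N + c), tau; split; first lra.
split => //; split => // s i.
case: (node_cases i) => [leaf_i|->|ti].
- rewrite xs_leaf //; apply: le_trans (traj_leaf_bound s leaf_i) _.
  by apply: le_trans (pow_le s) _; rewrite ler_peMl //; lra.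
- rewrite xs_center; apply: le_trans (center_bound s) _.
  by apply: ler_wpM2r => //; lra.
case: s => [|s].
  apply: le_trans (dist01 (simplex_entry01 (x_simplex 0) i) (simplex_entry01 xs_simplex i)) _.
  by rewrite expr0 mulr1; lra.
apply: le_trans (traj_follower_bound s ti) _.
have xi_bound : `|xi (x s.+1) - Xs| / N <= N * tau ^+ s.+1.
  rewrite ler_pdivrMr ?ltr0n //; apply: le_trans (traj_xi_bound _) _.
  have -> : N * tau ^+ s.+1 * N = N * N * tau ^+ s.+1 by ring.
  by apply: ler_wpM2l (pow_le _); rewrite mulr_ge0 ?ler0n.
by have := center_bound s.+1; have := pow_ge0 s.+1; lra.
Qed.

End Convergence.

Lemma balanced_equilibrium : exists xs : 'cV[R]_n,
  let r := #|[pred j | theta j == 0]| in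
  let xi := N - r%:R - N * \sum_(j | is_leaf j) xs j 0 in
  (forall i, 0 < theta i -> i != l -> xs i 0 = rs i) /\
  xs l 0 = root_val n (theta l) xi /\
  (forall i, theta i = 0 -> xs i 0 = N^-1 + (xi / N - xs l 0) * C l i) /\
  in_simplex xs /\ F xs = xs /\
  (forall y, in_simplex y -> F y = y -> y = xs) /\
  (forall x0, in_simplex x0 -> exp_conv_vec (traj x0) xs).
Proof.
exists xs => r xi_xs_def; have -> : xi_xs_def = Xs by exact: xi_xs.
split; first by move=> i ti_pos il; rewrite xs_leaf // ti_pos.
split; first by rewrite xs_center.
split; first by move=> i ti; rewrite xs_follower // xs_center.
split; first exact: xs_simplex.
split; first exact: xs_fixed.
split; first exact: xs_unique.
exact: traj_exp_conv.
Qed.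

End Balanced.

End Dynamics.

Theorem theorem5 (R : archiRcfType) (n : nat) (C : 'M[R]_n)
  (theta : 'I_n -> R) (l : 'I_n) :
  (2 <= n)%N ->
  row_stochastic_zero_diag C ->
  (forall i, 0 <= theta i /\ theta i <= 1) ->
  (forall i, theta i < 1) ->
  (exists j, 0 < theta j) ->
  star_topology C l ->
  0 < theta l -> theta l < 1 ->
  (* (i) *)
  (forall i, 0 < theta i -> i != l -> C l i = 0 ->
     forall x0, in_simplex x0 ->
       exp_conv (fun s => traj C theta x0 s i 0) (root_val n (theta i) 1))
  /\
  (* (ii) *)
  ((forall i, 0 < theta i -> i != l -> C l i = 0) ->
   \sum_(j | (0 < theta j) && (j != l)) theta j <= 4%:R * n%:R / 5%:R - 1 ->
   exists xs : 'cV[R]_n,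
     let r := #|[pred j | theta j == 0]| in
     let xi := n%:R - r%:R - n%:R * \sum_(j | (0 < theta j) && (j != l)) xs j 0 in
     (forall i, 0 < theta i -> i != l -> xs i 0 = root_val n (theta i) 1) /\
     xs l 0 = root_val n (theta l) xi /\
     (forall i, theta i = 0 -> xs i 0 = n%:R^-1 + (xi / n%:R - xs l 0) * C l i) /\
     in_simplex xs /\
     Fmap C theta xs = xs /\
     (forall y, in_simplex y -> Fmap C theta y = y -> y = xs) /\
     (forall x0, in_simplex x0 -> exp_conv_vec (traj C theta x0) xs)).
Proof.
move=> n_ge2 HC theta01 theta_lt1 _ Hstar center_pos _; split.
  exact: leaf_exp_conv n_ge2 HC theta01 theta_lt1 Hstar.
exact: balanced_equilibrium n_ge2 HC theta01 theta_lt1 Hstar center_pos.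
Qed.
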